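(* Let $\lambda\in\mathbb Z^n\setminus\{0\}$ have coprime coefficients and let $\{\gamma_1,\dots,\gamma_{n-1}\}\subseteq\mathcal N(\lambda)$ be linearly independent in $\mathbb Q^n$. If $\alpha,\beta\in\mathbb N_0^n$ satisfy $[\mathbf X^\alpha-\mathbf X^\beta](\gamma_i)=0$ for each $i=1,\dots,n-1$, then $\mathbf X^{\lambda^+}-\mathbf X^{\lambda^-}$ divides $\mathbf X^\alpha-\mathbf X^\beta$ in $\mathbb Z[X_1,\dots,X_n]$.
   Context: For $\alpha\in\mathbb N_0^n$, $\mathbf X^\alpha=\prod_iX_i^{(\alpha)_i}$. For $\gamma\in\mathbb Z^n$ and a polynomial $p$, $p(\gamma)\in\mathbb Q(x)$ is the image of $p$ under $X_i\mapsto x^{(\gamma)_i}$. $\lambda^+,\lambda^-\in\mathbb N_0^n$ are the unique vectors with $\lambda=\lambda^+-\lambda^-$, $\lambda^+\cdot\lambda^-=0$. Coprime coefficients: gcd of coordinates equals $1$. $\mathcal N(\lambda)=\{\alpha\in\mathbb Z^n:\lambda\cdot\alpha=0\}$. *)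

From HB Require Import structures.
From mathcomp Require Import all_boot all_order all_algebra fraction.
Set Implicit Arguments. Unset Strict Implicit. Unset Printing Implicit Defensive.
Import Order.TTheory GRing.Theory Num.Theory.
Local Open Scope ring_scope.

(* Z[X_0, ..., X_{n-1}] as the iterated polynomial ring:
   mpoly 0 = Z, mpoly (m+1) = (mpoly m)[X_m]. *)
Fixpoint mpoly (n : nat) : idomainType :=
  match n with
  | 0 => int
  | m.+1 => {poly (mpoly m)}
  end.

(* the variable X_i in mpoly n (meaningful for i < n) *)
Fixpoint mvar (n i : nat) : mpoly n :=
  match n return mpoly n with
  | 0 => 0
  | m.+1 => if i == m then 'X else (mvar m i)%:P
  end.

Definition mono (n : nat) (a : 'I_n -> nat) : mpoly n :=
  \prod_(i < n) mvar n i ^+ a i.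

Fixpoint meval (K : fieldType) (v : nat -> K) (n : nat) : mpoly n -> K :=
  match n return mpoly n -> K with
  | 0 => fun c => c%:~R
  | m.+1 => fun p => (map_poly (@meval K v m) p).[v m]
  end.

Definition Qx : fieldType := {fraction {poly rat}}.
Definition xQ : Qx := @FracField.tofrac _ ('X : {poly rat}).

Definition gpt (n : nat) (g : 'I_n -> int) : nat -> Qx :=
  fun k => if (insub k : option 'I_n) is Some i then xQ ^ (g i) else 1.

Definition peval (n : nat) (p : mpoly n) (g : 'I_n -> int) : Qx :=
  meval (gpt g) p.

Definition posp (n : nat) (l : 'I_n -> int) : 'I_n -> nat :=
  fun i => if 0 <= l i then `|l i|%N else 0%N.
Definition negp (n : nat) (l : 'I_n -> int) : 'I_n -> nat :=
  fun i => if l i < 0 then `|l i|%N else 0%N.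

Definition coprime_coeffs (n : nat) (l : 'I_n -> int) : Prop :=
  (\big[gcdn/0%N]_(i < n) `|l i|%N = 1)%N.

Definition inN (n : nat) (l g : 'I_n -> int) : Prop :=
  \sum_(i < n) l i * g i = 0.

From HB Require Import structures.
From mathcomp Require Import all_boot all_order all_algebra fraction zify.
Set Implicit Arguments.
Unset Strict Implicit.
Unset Printing Implicit Defensive.

Import Order.TTheory GRing.Theory Num.Theory.
Local Open Scope ring_scope.

(* Since x is transcendental, [X^alpha - X^beta](gamma) = 0 says exactly that
   gamma is orthogonal to alpha - beta. Hence alpha - beta lies in the
   orthogonal complement of the gamma_i, which is the line Q lambda; as lambda
   is primitive, alpha - beta = k lambda with k an integer. Writing
   alpha = m + k lambda^+ and beta = m + k lambda^- (for k >= 0), the binomial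
   is X^m ((X^lambda^+)^k - (X^lambda^-)^k), a multiple of
   X^lambda^+ - X^lambda^-. *)

Lemma meval_rmorph (K : fieldType) (v : nat -> K) (n : nat) :
  {f : {rmorphism mpoly n -> K} | meval v (n:=n) =1 f}.
Proof.
elim: n => [|m [f Hf]]; first by exists (intr : {rmorphism int -> K}).
have cf : commr_rmorph f (v m) by move=> a; exact: mulrC.
by exists (horner_morph cf) => p /=; rewrite /horner_morph (eq_map_poly Hf).
Qed.

Lemma meval_mvar (K : fieldType) (v : nat -> K) (n i : nat) :
  (i < n)%N -> meval v (mvar n i) = v i.
Proof.
elim: n => [//|m IH] lt_i /=.
have [f Hf] := meval_rmorph v m.
rewrite (eq_map_poly Hf); case: eqP => [->|i_neq_m].
  by rewrite map_polyX hornerX.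
rewrite map_polyC hornerC -IH; first by rewrite Hf.
by move: lt_i; rewrite ltnS leq_eqVlt => /orP[/eqP|].
Qed.

Lemma pevalB n (p q : mpoly n) (g : 'I_n -> int) :
  peval (p - q) g = peval p g - peval q g.
Proof.
by rewrite /peval; have [f Hf] := meval_rmorph (gpt g) n; rewrite !Hf rmorphB.
Qed.

Lemma xQ_neq0 : xQ != 0.
Proof. by rewrite /xQ tofrac_eq0 polyX_eq0. Qed.

Lemma peval_mono n (a : 'I_n -> nat) (g : 'I_n -> int) :
  peval (mono a) g = xQ ^ (\sum_(i < n) (a i)%:Z * g i).
Proof.
rewrite /peval; have [f Hf] := meval_rmorph (gpt g) n.
rewrite Hf /mono rmorph_prod.
apply: (big_rec2 (fun x y => x = xQ ^ y)) => // i y1 y2 _ ->.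
rewrite expfzDr ?xQ_neq0 // rmorphXn -Hf meval_mvar // /gpt valK.
by rewrite [(a i : int) * _]mulrC -exprz_exp.
Qed.

Lemma expfz_xQ_eq1 (z : int) : xQ ^ z = 1 -> z = 0.
Proof.
have xQn_eq1 k : xQ ^+ k = 1 -> k = 0%N.
  rewrite /xQ -tofracXn -tofrac1 => /eqP; rewrite tofrac_eq => /eqP E.
  have := congr1 (fun p : {poly rat} => size p) E.
  by rewrite size_polyXn size_poly1 => -[].
case: z => k; first by move/xQn_eq1 ->.
rewrite NegzE -exprnN => /(congr1 GRing.inv).
by rewrite invrK invr1 => /xQn_eq1.
Qed.

Lemma peval_binomial_eq0 n (a b : 'I_n -> nat) (g : 'I_n -> int) :
  peval (mono a - mono b) g = 0 ->
  \sum_(i < n) ((a i)%:Z - (b i)%:Z) * g i = 0.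
Proof.
rewrite pevalB !peval_mono => /eqP; rewrite subr_eq0 => /eqP Eab.
apply: expfz_xQ_eq1.
under eq_bigr do rewrite mulrBl.
by rewrite sumrB expfzDr ?xQ_neq0 // Eab -expfzDr ?xQ_neq0 // subrr.
Qed.

Lemma kermx_rank1_proportional (F : fieldType) n (A : 'M[F]_(n.-1, n))
    (u v : 'rV[F]_n) :
  row_free A -> u *m A^T = 0 -> v *m A^T = 0 -> u != 0 ->
  exists a, v = a *: u.
Proof.
move=> freeA uA0 vA0 u_neq0.
have uK : (u <= kermx A^T)%MS by apply/sub_kermxP.
have vK : (v <= kermx A^T)%MS by apply/sub_kermxP.
have rank_u : \rank u = 1%N by rewrite rank_rV u_neq0.
have rank_ker : \rank (kermx A^T) = 1%N.
  have := mxrankS uK; rewrite mxrank_ker mxrank_tr (eqP freeA) rank_u; lia.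
have Ku : (kermx A^T <= u)%MS.
  by have := mxrank_leqif_sup uK; rewrite rank_u rank_ker => -[_ <-].
exact/sub_rVP/(submx_trans vK Ku).
Qed.

Definition intrV n (d : 'I_n -> int) : 'rV[rat]_n := \row_i (d i)%:~R.

Lemma intrV_mulmx_tr m n (G : 'M[int]_(m, n)) (d : 'I_n -> int) :
  (forall j, \sum_i d i * G j i = 0) -> intrV d *m (map_mx intr G)^T = 0.
Proof.
move=> dG0; apply/matrixP => i j; rewrite !mxE.
transitivity ((\sum_k d k * G j k)%:~R : rat); last by rewrite dG0.
by rewrite rmorph_sum; apply: eq_bigr => k _; rewrite !mxE rmorphM.
Qed.

Lemma int_multiple_of_primitive n (lam d : 'I_n -> int) (a : rat) :
  coprime_coeffs lam -> (forall i, (d i)%:~R = a * (lam i)%:~R) ->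
  exists k : int, forall i, d i = k * lam i.
Proof.
move=> lam_prim d_a.
have den_d i : denq a * d i = numq a * lam i.
  apply: (@intr_inj rat); rewrite !intrM d_a mulrA -{2}(divq_num_den a).
  by rewrite mulrCA divff ?mulr1 // intr_eq0 denq_neq0.
have den_dvd i : (`|denq a| %| `|lam i|)%N.
  have coprime_den_num : coprime `|denq a| `|numq a|.
    by rewrite coprime_sym coprime_num_den.
  by rewrite -(Gauss_dvdr _ coprime_den_num) -abszM -den_d abszM dvdn_mulr.
have den_abs1 : `|denq a|%N = 1%N.
  by apply/eqP; rewrite -dvdn1 -lam_prim; exact/dvdn_biggcdP.
have den1 : denq a = 1.
  by have := denq_gt0 a; case: (denq a) den_abs1 => // k /= ->.
by exists (numq a) => i; rewrite -den_d den1 mul1r.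
Qed.

Lemma eq_mono n (a b : 'I_n -> nat) : a =1 b -> mono a = mono b.
Proof. by move=> eq_ab; apply: eq_bigr => i _; rewrite eq_ab. Qed.

Lemma monoD n (a b : 'I_n -> nat) :
  mono (fun i => a i + b i)%N = mono a * mono b.
Proof. by rewrite /mono -big_split; apply: eq_bigr => i _; rewrite exprD. Qed.

Lemma monoMn n (a : 'I_n -> nat) (k : nat) :
  mono (fun i => k * a i)%N = mono a ^+ k.
Proof.
by rewrite /mono -prodrXl; apply: eq_bigr => i _; rewrite mulnC exprM.
Qed.

Lemma binomial_dvd n (a b u w : 'I_n -> nat) (k : nat) :
  (forall i, u i * w i = 0)%N ->
  (forall i, (a i)%:Z - (b i)%:Z = k%:Z * ((u i)%:Z - (w i)%:Z)) ->
  exists q : mpoly n, mono a - mono b = q * (mono u - mono w).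
Proof.
move=> uw0 ab_uw; pose m i := minn (a i) (b i).
have [Ea Eb] : a =1 (fun i => m i + k * u i)%N /\
               b =1 (fun i => m i + k * w i)%N.
  split=> i; have := ab_uw i; have := uw0 i;
    rewrite /m => /eqP; rewrite muln_eq0 => /orP[] /eqP ->; lia.
rewrite (eq_mono Ea) (eq_mono Eb) !monoD !monoMn -mulrBr subrXX.
exists (mono m * \sum_(i < k) mono u ^+ (k.-1 - i) * mono w ^+ i).
by rewrite -mulrA [X in _ * X]mulrC.
Qed.

Lemma posp_mul_negp n (lam : 'I_n -> int) i : (posp lam i * negp lam i = 0)%N.
Proof.
by rewrite /posp /negp; case: (leP 0 (lam i)); case: (ltP (lam i) 0); lia.
Qed.

Lemma posp_sub_negp n (lam : 'I_n -> int) i :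
  (posp lam i)%:Z - (negp lam i)%:Z = lam i.
Proof.
by rewrite /posp /negp; case: (leP 0 (lam i)); case: (ltP (lam i) 0); lia.
Qed.

Lemma binomial_dvd_posp_negp n (lam : 'I_n -> int) (a b : 'I_n -> nat) (k : int) :
  (forall i, (a i)%:Z - (b i)%:Z = k * lam i) ->
  exists q : mpoly n, mono a - mono b = q * (mono (posp lam) - mono (negp lam)).
Proof.
move=> ab_lam; case: (leP 0 k) => [k_ge0|k_lt0].
  apply: (binomial_dvd (k := `|k|%N)) (posp_mul_negp lam) _ => i.
  by rewrite posp_sub_negp ab_lam gez0_abs.
have [q Eq] : exists q : mpoly n,
    mono b - mono a = q * (mono (posp lam) - mono (negp lam)).
  apply: (binomial_dvd (k := `|k|%N)) (posp_mul_negp lam) _ => i.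
  by rewrite posp_sub_negp ltz0_abs // mulNr -ab_lam opprB.
by exists (- q); rewrite mulNr -Eq opprB.
Qed.

Theorem lemma3p5 (n : nat) (lam : 'I_n -> int) (G : 'M[int]_(n.-1, n))
  (alpha beta : 'I_n -> nat) :
  (exists i, lam i != 0) ->
  coprime_coeffs lam ->
  (forall j : 'I_n.-1, inN lam (fun i => G j i)) ->
  row_free (map_mx (intr : int -> rat) G) ->
  (forall j : 'I_n.-1, peval (mono alpha - mono beta) (fun i => G j i) = 0) ->
  exists q : mpoly n,
    mono alpha - mono beta = q * (mono (posp lam) - mono (negp lam)).
Proof.
move=> [i0 lam_i0] lam_prim lamG freeG ab_root.
pose d i := (alpha i)%:Z - (beta i)%:Z.
have dG j : \sum_i d i * G j i = 0 by exact: peval_binomial_eq0 (ab_root j).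
have lam_neq0 : intrV lam != 0.
  apply/negP => /eqP/matrixP/(_ 0 i0)/eqP.
  by rewrite !mxE intr_eq0 (negPf lam_i0).
have [a Ea] := kermx_rank1_proportional freeG
  (intrV_mulmx_tr lamG) (intrV_mulmx_tr dG) lam_neq0.
have [k Ek] : exists k : int, forall i, d i = k * lam i.
  apply: (int_multiple_of_primitive (a := a)) lam_prim _ => i.
  by move/matrixP/(_ 0 i): Ea; rewrite !mxE => ->.
exact: binomial_dvd_posp_negp Ek.
Qed.
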